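(* Let $m\ge2$ be an integer and put $p(t)=t^{2^m}+1$ for $t\in\mathbb{R}$. Then there is a real polynomial $q$ of degree $2^{m-1}$ such that all $2^{m-1}+1$ coefficients of $q$ are positive and $p(t)=q(t)\,q(-t)$. *)

From mathcomp Require Import all_boot all_order all_algebra.
From mathcomp Require Import reals.

(* If [-2 < a < 2] then [t^4 + a t^2 + 1 = (t^2 + b t + 1)(t^2 - b t + 1)] with
   [b = sqrt (2 - a)], and [-2 < +-b < 2] again.  Starting from [t^2 + 1] and
   substituting [t^2] for [t] repeatedly, this splits [t^(2^(k+1)) + 1] into
   [2^k] real quadratics [t^2 + a t + 1] with [|a| < 2]; one more substitution
   splits every factor [t^4 + a t^2 + 1] as [q_a(t) q_a(-t)] where
   [q_a = X^2 + sqrt (2 - a) X + 1] has positive coefficients, and then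
   [q = prod_a q_a] works since positivity of coefficients is stable under
   products. *)
From mathcomp Require Import all_boot all_order all_algebra.
From mathcomp Require Import reals.
From mathcomp Require Import zify ring lra.
Import Order.TTheory GRing.Theory Num.Theory.
Local Open Scope ring_scope.

Section PositiveCoefficients.
Variable R : numDomainType.

Definition positive_coefs (p : {poly R}) : Prop :=
  forall i, (i < size p)%N -> 0 < p`_i.

Lemma positive_coefs_ge0 p : positive_coefs p -> forall i, 0 <= p`_i.
Proof.
move=> pos_p i; have [/pos_p/ltW //|le_p_i] := ltnP i (size p).
by rewrite nth_default.
Qed.

Lemma positive_coefs_mul p q :
  positive_coefs p -> positive_coefs q -> positive_coefs (p * q).
Proof.
move=> pos_p pos_q i.
have [->|nz_p] := eqVneq p 0; first by rewrite mul0r size_poly0.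
have [->|nz_q] := eqVneq q 0; first by rewrite mulr0 size_poly0.
move=> /leq_trans/(_ (size_polyMleq p q)) lt_i_pq.
have gt0_p : (0 < size p)%N by rewrite size_poly_gt0.
have gt0_q : (0 < size q)%N by rewrite size_poly_gt0.
(* the summand [p_j q_(i-j)] with [j = min i (deg p)] has both indices in range *)
pose j := minn i (size p).-1.
have le_j_i : (j < i.+1)%N by rewrite ltnS geq_minl.
rewrite coefM (bigD1 (Ordinal le_j_i)) //=.
apply: ltr_pwDl.
  apply: mulr_gt0; [apply: pos_p | apply: pos_q]; rewrite /j; lia.
by apply: sumr_ge0 => k _; apply: mulr_ge0; apply: positive_coefs_ge0.
Qed.

Lemma positive_coefs_prod (I : eqType) (r : seq I) (F : I -> {poly R}) :
  (forall i, i \in r -> positive_coefs (F i)) ->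
  positive_coefs (\prod_(i <- r) F i).
Proof.
move=> pos_F; rewrite big_seq.
apply: big_ind => [|p q|i /pos_F //]; last exact: positive_coefs_mul.
by move=> i; rewrite size_poly1 ltnS leqn0 => /eqP ->; rewrite coef1 ltr01.
Qed.

End PositiveCoefficients.

Arguments positive_coefs {R} p.

Section PalindromicQuadratic.
Variable R : comNzRingType.

Definition quad (b : R) : {poly R} := Poly [:: 1; b; 1].

Lemma size_quad b : size (quad b) = 3%N.
Proof. by rewrite /quad (PolyK (c := 0)) ?oner_neq0. Qed.

Lemma horner_quad b t : (quad b).[t] = t ^+ 2 + b * t + 1.
Proof. by rewrite horner_Poly /=; ring. Qed.

Lemma quad_hornerN b t : (quad b).[- t] = (quad (- b)).[t].
Proof. by rewrite !horner_quad; ring. Qed.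

Lemma quad_mul_hornerN b t :
  (quad b).[t] * (quad b).[- t] = (quad (2 - b ^+ 2)).[t ^+ 2].
Proof. by rewrite !horner_quad; ring. Qed.

End PalindromicQuadratic.

Arguments quad {R} b.

Lemma positive_coefs_quad (R : numDomainType) (b : R) :
  0 < b -> positive_coefs (quad b).
Proof. by move=> b_gt0 i; rewrite size_quad coef_Poly; case: i => [|[|[|]]]. Qed.

Lemma size_prod_quad (R : idomainType) (I : eqType) (r : seq I) (F : I -> R) :
  size (\prod_(i <- r) quad (F i)) = (2 * size r).+1.
Proof.
rewrite size_prod_seq => [|i _]; last by rewrite -size_poly_gt0 size_quad.
rewrite (eq_bigr (fun=> 3%N)) => [|i _]; last exact: size_quad.
rewrite big_const_seq count_predT iter_addn_0.
by move: (size r) => n; lia.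
Qed.

Section PowerOfTwoFactorization.
Variable R : rcfType.

Definition split_coef (a : R) : R := Num.sqrt (2 - a).

Lemma split_coefK (a : R) t : a <= 2 ->
  (quad (split_coef a)).[t] * (quad (split_coef a)).[- t] = (quad a).[t ^+ 2].
Proof.
by move=> le_a2; rewrite quad_mul_hornerN sqr_sqrtr ?subr_ge0 // opprB addrC subrK.
Qed.

Lemma split_coef_bounds (a : R) : -2 < a < 2 -> 0 < split_coef a < 2.
Proof.
case/andP=> gt_a lt_a; have b_ge0 : 0 <= split_coef a by exact: sqrtr_ge0.
have b_sq : split_coef a ^+ 2 = 2 - a by rewrite sqr_sqrtr //; lra.
apply/andP; split; nra.
Qed.

Fixpoint quad_coefs (k : nat) : seq R :=
  if k is k'.+1 then
    [seq split_coef a | a <- quad_coefs k'] ++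
    [seq - split_coef a | a <- quad_coefs k']
  else [:: 0].

Lemma size_quad_coefs k : size (quad_coefs k) = (2 ^ k)%N.
Proof. by elim: k => //= k IHk; rewrite size_cat !size_map IHk expnS mul2n addnn. Qed.

Lemma quad_coefs_bounds k a : a \in quad_coefs k -> -2 < a < 2.
Proof.
elim: k a => [a|k IHk a] /=; first by rewrite inE => /eqP ->; lra.
rewrite mem_cat => /orP[] /mapP[c /IHk/split_coef_bounds/andP[gt_b lt_b] ->];
  apply/andP; split; lra.
Qed.

Lemma exp2S_add1_prod_quad k t :
  t ^+ (2 ^ k.+1) + 1 = \prod_(a <- quad_coefs k) (quad a).[t].
Proof.
elim: k t => [|k IHk] t; first by rewrite big_seq1 horner_quad mul0r addr0.
rewrite /= big_cat !big_map /= -big_split /= expnS exprM IHk.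
apply: eq_big_seq => a /quad_coefs_bounds/andP[_ /ltW le_a2].
by rewrite -quad_hornerN split_coefK.
Qed.

End PowerOfTwoFactorization.

Arguments split_coef {R} a.

Theorem lemma9p1 (R : realType) (m : nat) (hm : (2 <= m)%N) :
  exists q : {poly R},
    size q = (2 ^ m.-1).+1 /\
    (forall i : nat, (i < size q)%N -> 0 < q`_i) /\
    (forall t : R, t ^+ (2 ^ m) + 1 = q.[t] * q.[- t]).
Proof.
case: m hm => [|[|k]] // _.
exists (\prod_(a <- quad_coefs R k) quad (split_coef a)); split; [|split].
- by rewrite size_prod_quad size_quad_coefs -expnS.
- apply: positive_coefs_prod => a /quad_coefs_bounds/split_coef_bounds/andP[b_gt0 _].
  exact: positive_coefs_quad.
- move=> t; rewrite !horner_prod -big_split /= expnS exprM exp2S_add1_prod_quad.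
  apply: eq_big_seq => a /quad_coefs_bounds/andP[_ /ltW le_a2].
  by rewrite split_coefK.
Qed.
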